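(* Let $q$ be a prime power and let $d,\tau,n,m$ be integers with $\lfloor (d-1)/2\rfloor+1\le\tau<d\le n\le m$ and $\tau\le n-\tau$. Then there exist a code $\mathcal C\subseteq\mathbb F_{q^m}^n$ with minimum rank distance at least $d$ and a word $\mathbf r\in\mathbb F_{q^m}^n$ such that $$\max_{\mathbf y\in\mathbb F_{q^m}^n}|\mathcal C\cap\mathcal B_\tau(\mathbf y)|\ \ge\ |\mathcal C\cap\mathcal B_\tau(\mathbf r)|\ \ge\ q^{(n-\tau)(\tau-\lfloor (d-1)/2\rfloor)}.$$
   Context: Fixing a basis of $\mathbb F_{q^m}$ over $\mathbb F_q$, each vector in $\mathbb F_{q^m}^n$ is identified with an $m\times n$ matrix over $\mathbb F_q$; $\mathrm{rk}$ denotes the rank of this matrix. The minimum rank distance of $\mathcal C$ is $\min\{\mathrm{rk}(\mathbf c_1-\mathbf c_2):\mathbf c_1\neq\mathbf c_2\in\mathcal C\}$, and $\mathcal B_\tau(\mathbf r)=\{\mathbf x:\mathrm{rk}(\mathbf x-\mathbf r)\le\tau\}$. Codes are not required to be linear. *)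

From HB Require Import structures.
From mathcomp Require Import all_boot all_order all_algebra all_field.
Set Implicit Arguments. Unset Strict Implicit. Unset Printing Implicit Defensive.
Import GRing.Theory.
Local Open Scope ring_scope.

(* The field extension L of F (L = F_{q^m} when #|F| = q and \dim {:L} = m). *)
Definition coordmx (F : fieldType) (L : fieldExtType F) (n : nat)
  (x : 'rV[L]_n) : 'M[F]_(\dim {:L}, n) :=
  \matrix_(i, j) coord (vbasis {:L}) i (x 0 j).

Definition rk (F : fieldType) (L : fieldExtType F) (n : nat) (x : 'rV[L]_n) : nat :=
  \rank (coordmx x).

Definition min_rank_dist_ge (F : fieldType) (L : fieldExtType F) (n : nat)
  (C : seq 'rV[L]_n) (d : nat) : Prop :=
  forall c1 c2, c1 \in C -> c2 \in C -> c1 != c2 -> (d <= rk (c1 - c2))%N.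

(* |C ∩ B_tau(r)| for a duplicate-free list C *)
Definition ball_count (F : fieldType) (L : fieldExtType F) (n : nat)
  (C : seq 'rV[L]_n) (tau : nat) (r : 'rV[L]_n) : nat :=
  count (fun x => (rk (x - r) <= tau)%N) C.

From HB Require Import structures.
From mathcomp Require Import all_boot all_order all_algebra all_field.
From mathcomp Require Import zify.
Set Implicit Arguments. Unset Strict Implicit. Unset Printing Implicit Defensive.
Import GRing.Theory passmx.
Local Open Scope ring_scope.

(* Let t = (d-1)/2, k = tau - t and N = n - tau, and view F_{q^N} as the
   field K.  A matrix X of k rows over F_q encodes a q-linearized polynomial
   f_X(y) = sum_(i<k) c_i y^(q^i) over K; let B_X be the tau x N matrix of f_X
   restricted to a tau-dimensional F_q-subspace of K.  The codewords are the
   n x n matrices [[I, B_X], [B_X^T, B_X^T B_X]] = [I; B_X^T] [I, B_X], padded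
   with zero rows to m rows.  Each has rank at most tau, so all q^(kN) of them
   lie in the ball of radius tau around 0.  A nonzero f_X has at most
   q^(k-1) roots, so rank (B_X - B_X') > tau - k, and block elimination turns
   the difference of two codewords into [[0, D], [D^T, 0]] with D = B_X - B_X',
   whose rank 2 rank D >= 2 (t + 1) >= d. *)

Lemma separable_XnsubX (R : idomainType) (Q : nat) :
  Q%:R = 0 :> R -> separable_poly ('X^Q - 'X : {poly R}).
Proof.
move=> QR0; rewrite unlock derivB derivXn derivX -scaler_nat QR0 scale0r.
by rewrite sub0r -[X in coprimep _ X]scaleN1r coprimepZr ?oppr_eq0 ?oner_eq0 // coprimep1.
Qed.

Lemma natr_card_fieldExt (F : finFieldType) (L : fieldExtType F) :
  #|F|%:R = 0 :> L.
Proof.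
have [p _ pcharFp] := finPcharP F.
have cardF : #|F| = (p ^ logn p #|F|)%N := card_pprimeChar pcharFp.
have s_gt0 : (0 < logn p #|F|)%N.
  by move: (finNzRing_gt1 F); rewrite {1}cardF lt0n; apply: contraTneq => ->.
by rewrite {1}cardF natrX pcharf0 ?pchar_lalg // expr0n gtn_eqF.
Qed.

(* As in [pPrimePowerField]: the splitting field of 'X^Q - 'X has Q elements. *)
Lemma exists_fieldExt_dim (F : finFieldType) (N : nat) :
  (0 < N)%N -> exists K : fieldExtType F, \dim {:K} = N.
Proof.
move=> N_gt0; set Q := (#|F| ^ N)%N.
have q_gt1 : (1 < #|F|)%N := finNzRing_gt1 F.
have Q_gt1 : (1 < Q)%N by rewrite /Q -(exp1n N) ltn_exp2r.
pose pQ (R : nzRingType) : {poly R} := 'X^Q - 'X.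
have size_pQ (R : nzRingType) : size (pQ R) = Q.+1.
  by rewrite size_polyDl size_polyXn // size_polyN size_polyX.
have /FinSplittingFieldFor[/= L [zs DpQ defL]] : pQ F != 0.
  by rewrite -size_poly_gt0 size_pQ.
rewrite [map_poly _ _]rmorphB rmorphXn /= map_polyX -/(pQ L) in DpQ.
have QL0 : Q%:R = 0 :> L by rewrite natrX natr_card_fieldExt expr0n gtn_eqF.
have uniq_zs : uniq zs.
  by rewrite -separable_prod_XsubC -(eqp_separable DpQ) separable_XnsubX.
have /finField_galois_generator[/= a _ Da] : (1 <= {:L})%VS by apply: sub1v.
rewrite dimv1 expn1 in Da; pose Em := fixedSpace (a ^+ N)%g.
have fixed_zs : zs =i Em.
  move=> z; rewrite -root_prod_XsubC -(eqp_root DpQ) (sameP fixedSpaceP eqP).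
  rewrite /root !hornerE subr_eq0 /= /Q; congr (_ == z).
  elim: (N) => [|i IHi]; first by rewrite gal_id.
  by rewrite expgSr expnSr exprM IHi galM ?Da ?memvf.
have fixed_full : Em = {:L}%VS.
  apply/eqP; rewrite eqEsubv subvf -defL -[Em]subfield_closed agenvS //.
  by rewrite subv_add sub1v; apply/span_subvP => z; rewrite fixed_zs.
have card_L : #|FinFieldExtType L| = Q.
  suffices /eq_card-> : FinFieldExtType L =i zs.
    by apply: succn_inj; rewrite (card_uniqP _) // -(size_prod_XsubC _ id)
      -(eqp_size DpQ) size_pQ.
  by move=> z; rewrite fixed_zs fixed_full memvf.
exists L; apply: (@expnI #|F|) => //.
by rewrite -/Q -card_L -(card_vspacef (Vector.class (finvect_type L))) card_vspace.
Qed.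

Section FrobeniusPower.
Variables (F : finFieldType) (K : fieldExtType F) (i : nat).
Local Notation qi := (#|F| ^ i)%N.

Lemma expf_card_pow (c : F) : c ^+ qi = c.
Proof.
elim: i => [|j IHj]; first by rewrite expr1.
by rewrite expnSr exprM IHj expf_card.
Qed.

Lemma exprD_card_pow (x y : K) : (x + y) ^+ qi = x ^+ qi + y ^+ qi.
Proof.
have [p pr_p pcharFp] := finPcharP F.
rewrite [#|F|](card_pprimeChar pcharFp) -expnM exprDn_pchar ?pchar_lalg //.
by rewrite pnatX (pnatE _ pr_p) pchar_lalg pcharFp.
Qed.

Lemma expr_card_pow_sum (I : finType) (w : I -> F) (v : I -> K) :
  (\sum_j w j *: v j) ^+ qi = \sum_j w j *: v j ^+ qi.
Proof.
elim/big_rec2: _ => [|j a b _ <-]; last by rewrite exprD_card_pow exprZn expf_card_pow.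
by rewrite expr0n expn_eq0 gtn_eqF // ltnW // finNzRing_gt1.
Qed.

End FrobeniusPower.

Section Linearized.
Variables (F : finFieldType) (K : fieldExtType F) (k : nat).
Local Notation e := (vbasis {:K}).
Local Notation q := #|F|.
Implicit Types (X : 'M[F]_(k, \dim {:K})) (y : K).

Definition linearized X y : K :=
  \sum_(i < k) vecof e (row i X) * y ^+ (q ^ i).

Lemma linearizedB X X' y :
  linearized (X - X') y = linearized X y - linearized X' y.
Proof.
by rewrite -sumrB; apply: eq_bigr => i _; rewrite rowE mulmxBr linearB -!rowE mulrBl.
Qed.

Lemma linearized_sum X (I : finType) (w : I -> F) (v : I -> K) :
  linearized X (\sum_j w j *: v j) = \sum_j w j *: linearized X (v j).
Proof.
rewrite /linearized; under eq_bigr do rewrite expr_card_pow_sum mulr_sumr.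
rewrite exchange_big; apply: eq_bigr => j _; rewrite scaler_sumr.
by apply: eq_bigr => i _; rewrite scalerAr.
Qed.

Lemma roots_linearized X (s : seq K) :
  X != 0 -> uniq s -> all (fun y => linearized X y == 0) s ->
  (size s <= q ^ k.-1)%N.
Proof.
move=> nzX uniq_s roots_s; have q_gt1 := finNzRing_gt1 F.
pose c i := vecof e (row i X).
have [i0 nz_c] : exists i0, c i0 != 0.
  apply/existsP; apply: contraNT nzX; rewrite negb_exists => /forallP c0.
  apply/eqP/row_matrixP => i; rewrite row0; apply/eqP.
  by rewrite -(vecof_eq0 (vbasisP _)); have := c0 i; rewrite negbK.
pose P := \sum_(i < k) c i *: 'X^(q ^ i).
have P_nz : P != 0.
  apply: contraNneq nz_c => P0; have := congr1 (fun p : {poly K} => p`_(q ^ i0)) P0.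
  rewrite coef_sumMXn coef0; under eq_bigl do rewrite eqn_exp2l //.
  by rewrite big_pred1_eq => /eqP.
have size_P : (size P <= (q ^ k.-1).+1)%N.
  apply: leq_trans (size_sum _ _ _) _; apply/bigmax_leqP => i _.
  apply: leq_trans (size_scale_leq _ _) _; rewrite size_polyXn ltnS leq_exp2l //.
  by rewrite -ltnS prednK //; apply: leq_ltn_trans (ltn_ord i0).
have roots_P : all (root P) s.
  apply: sub_all roots_s => y; rewrite /root horner_sum.
  by under eq_bigr do rewrite hornerZ hornerXn.
by have := leq_trans (max_poly_roots P_nz roots_P uniq_s) size_P; rewrite ltnS.
Qed.

Variables (tau : nat) (v : tau.-tuple K).

Definition restr_mx X : 'M[F]_(tau, \dim {:K}) :=
  \matrix_(j < tau) rVof e (linearized X v`_j).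

Lemma restr_mxB X X' : restr_mx (X - X') = restr_mx X - restr_mx X'.
Proof. by apply/matrixP => j l; rewrite !mxE linearizedB linearB. Qed.

Lemma mxrank_restr_mx X : free v -> X != 0 -> (tau < \rank (restr_mx X) + k)%N.
Proof.
(* The kernel of [restr_mx X] yields q ^ (tau - rank) distinct roots. *)
move=> free_v nzX; have q_gt1 := finNzRing_gt1 F.
have k_gt0 : (0 < k)%N by case: k X nzX => // X; rewrite flatmx0 eqxx.
set A := restr_mx X; set r := \rank (kermx A).
pose w (u : 'rV[F]_r) := u *m row_base (kermx A).
pose y u := \sum_j w u 0 j *: v`_j.
have root_y u : linearized X (y u) == 0.
  have ker_w : w u *m A = 0.
    by apply/sub_kermxP; rewrite (submx_trans (submxMl _ _)) ?eq_row_base.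
  rewrite -(rVof_eq0 (vbasisP _)) linearized_sum linear_sum; apply/eqP.
  by rewrite -[RHS]ker_w mulmx_sum_row; apply: eq_bigr => j _; rewrite linearZ rowK.
have inj_y : injective y.
  move=> u u' yuu'; apply: (row_free_inj (row_base_free _)); apply/rowP => j.
  by have := congr1 (coord v j) yuu'; rewrite !coord_sum_free.
have : (size (map y (enum 'rV[F]_r)) <= q ^ k.-1)%N.
  apply: roots_linearized nzX _ _; first by rewrite map_inj_uniq ?enum_uniq.
  by apply/allP => _ /mapP[u _ ->]; apply: root_y.
rewrite size_map -cardE card_mx mul1n leq_exp2l // /r mxrank_ker; lia.
Qed.

End Linearized.

Section LiftMatrix.
Variables (R : fieldType) (t N : nat).
Implicit Types B : 'M[R]_(t, N).

Definition lift_mx B : 'M[R]_(t + N) := block_mx 1%:M B B^T (B^T *m B).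

Lemma lift_mxE B : lift_mx B = col_mx 1%:M B^T *m row_mx 1%:M B.
Proof. by rewrite mul_col_row !mulmx1 mul1mx. Qed.

Lemma mxrank_lift_mx B : (\rank (lift_mx B) <= t)%N.
Proof. by rewrite lift_mxE (leq_trans (mxrankM_maxl _ _)) ?rank_leq_col. Qed.

Lemma mxrank_antidiag_block m n (P : 'M[R]_(m, n)) (Q : 'M[R]_(n, m)) :
  \rank (block_mx 0 P Q 0) = (\rank P + \rank Q)%N.
Proof.
rewrite block_mxEv -addsmxE mxrank_disjoint_sum ?rank_row_mx0 ?rank_row_0mx //.
apply/eqP/rowV0P => u; rewrite sub_capmx => /andP[/submxP[x ->]].
rewrite mul_mx_row mulmx0 => /submxP[z]; rewrite mul_mx_row mulmx0.
by move=> /eq_row_mx[_ ->]; rewrite row_mx0.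
Qed.

Lemma lift_mxB_equiv B B' :
  block_mx 1%:M 0 (- B^T) 1%:M *m (lift_mx B - lift_mx B') *m
  block_mx 1%:M (- B') 0 1%:M = block_mx 0 (B - B') (B - B')^T 0.
Proof.
rewrite /lift_mx opp_block_mx add_block_mx !mulmx_block subrr.
rewrite !mul0mx !mulmx0 !mul1mx !mulmx1 !addr0 !add0r mul0mx add0r.
congr block_mx; first by rewrite linearB.
by rewrite mulmxN mulmxBl !mulNmx mulmxBr !opprB addrC !addrA !subrK subrr.
Qed.

Lemma mxrank_lift_mxB B B' :
  (2 * \rank (B - B')%R <= \rank (lift_mx B - lift_mx B')%R)%N.
Proof.
set P := block_mx 1%:M 0 (- B^T) 1%:M; set Q := block_mx 1%:M (- B') 0 1%:M.
have := mxrankM_maxl (P *m (lift_mx B - lift_mx B')) Q.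
rewrite lift_mxB_equiv mxrank_antidiag_block mxrank_tr addnn -mul2n => le2.
exact: leq_trans le2 (mxrankM_maxr _ _).
Qed.

End LiftMatrix.

Section PadRows.
Variables (R : fieldType) (m m' n : nat).
Hypothesis le_mm' : (m <= m')%N.

Definition pad_rows (A : 'M[R]_(m, n)) : 'M[R]_(m', n) :=
  castmx (subnKC le_mm', erefl n) (col_mx A 0).

Lemma pad_rowsB A B : pad_rows (A - B) = pad_rows A - pad_rows B.
Proof.
by apply/matrixP => i j; rewrite !(castmxE, mxE); case: split => l; rewrite !mxE ?subr0.
Qed.

Lemma mxrank_pad_rows A : \rank (pad_rows A) = \rank A.
Proof. by rewrite (eqmx_cast _ _).1 rank_col_mx0. Qed.

End PadRows.

Section RankWords.
Variables (F : fieldType) (L : fieldExtType F) (n : nat).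
Implicit Types M : 'M[F]_(\dim {:L}, n).

Definition word_of_mx M : 'rV[L]_n := \row_j vecof (vbasis {:L}) (col j M)^T.

Lemma coordmx_word M : coordmx (word_of_mx M) = M.
Proof. by apply/matrixP => i j; rewrite !mxE coord_vecof ?vbasisP // !mxE. Qed.

Lemma rk_word M : rk (word_of_mx M) = \rank M.
Proof. by rewrite /rk coordmx_word. Qed.

Lemma coordmxB (x y : 'rV[L]_n) : coordmx (x - y) = coordmx x - coordmx y.
Proof. by apply/matrixP => i j; rewrite !mxE linearB. Qed.

Lemma rk_wordB M M' : rk (word_of_mx M - word_of_mx M') = \rank (M - M').
Proof. by rewrite /rk coordmxB !coordmx_word. Qed.

End RankWords.

Lemma exists_free_tuple (F : fieldType) (V : vectType F) (t : nat) :
  (t <= \dim {:V})%N -> exists v : t.-tuple V, free v.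
Proof.
move=> le_t; exists (tcast (minn_idPl le_t) [tuple of take t (vbasis {:V})]).
rewrite val_tcast /=; apply: (@catl_free _ _ (drop t (vbasis {:V}))).
by rewrite cat_take_drop (basis_free (vbasisP _)).
Qed.

Section RankCode.
Variables (F : finFieldType) (K L : fieldExtType F) (tau k : nat).
Variable v : tau.-tuple K.
Hypotheses (free_v : free v) (le_dim : (tau + \dim {:K} <= \dim {:L})%N).
Implicit Types X : 'M[F]_(k, \dim {:K}).

Definition codeword X : 'rV[L]_(tau + \dim {:K}) :=
  word_of_mx (pad_rows le_dim (lift_mx (restr_mx v X))).

Lemma rk_codeword X : (rk (codeword X) <= tau)%N.
Proof. by rewrite rk_word mxrank_pad_rows mxrank_lift_mx. Qed.

Lemma rk_codewordB X X' :
  X != X' -> (2 * (tau.+1 - k) <= rk (codeword X - codeword X'))%N.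
Proof.
rewrite -subr_eq0 => nzXX'; rewrite rk_wordB -pad_rowsB mxrank_pad_rows.
apply: leq_trans (mxrank_lift_mxB _ _); rewrite leq_mul2l /= -restr_mxB.
by rewrite leq_subLR addnC; apply: mxrank_restr_mx.
Qed.

Lemma codeword_inj : (k <= tau)%N -> injective codeword.
Proof.
move=> le_k X X' eqXX'; apply/eqP; apply: contraTT le_k => /rk_codewordB.
by rewrite eqXX' /codeword rk_wordB subrr mxrank0 -ltnNge; lia.
Qed.

End RankCode.

Theorem theorem4 (F : finFieldType) (L : fieldExtType F) (q d tau n m : nat) :
  #|F| = q -> \dim {:L} = m ->
  ((d.-1)./2 + 1 <= tau)%N -> (tau < d)%N -> (d <= n)%N -> (n <= m)%N ->
  (tau <= n - tau)%N ->
  exists (C : seq 'rV[L]_n) (r : 'rV[L]_n),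
    [/\ uniq C, min_rank_dist_ge C d,
        (exists ymax : 'rV[L]_n,
           (forall y, (ball_count C tau y <= ball_count C tau ymax)%N) /\
           (ball_count C tau r <= ball_count C tau ymax)%N) &
        (q ^ ((n - tau) * (tau - (d.-1)./2)) <= ball_count C tau r)%N].
Proof.
move=> cardF dimL le_t lt_td le_dn le_nm le_tn.
have le_d : (d <= 2 * ((d.-1)./2).+1)%N.
  by have := odd_double_half d.-1; have := leq_b1 (odd d.-1); lia.
move: ((d.-1)./2) le_t le_d => t le_t le_d.
have [N def_n] : exists N, n = (tau + N)%N by exists (n - tau)%N; lia.
have [K dimK] := @exists_fieldExt_dim F N ltac:(lia).
have [v free_v] := @exists_free_tuple _ K tau ltac:(lia).
subst n m N.
pose C := map (codeword v le_nm) (enum 'M[F]_(tau - t, \dim {:K})).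
have ball_C : ball_count C tau 0 = size C.
  by apply/eqP; rewrite -all_count; apply/allP => _ /mapP[X _ ->]; rewrite subr0 rk_codeword.
exists C, 0; split.
- rewrite map_inj_uniq; first exact: enum_uniq.
  by apply: (codeword_inj free_v); lia.
- move=> _ _ /mapP[X _ ->] /mapP[X' _ ->] neq.
  have /(rk_codewordB free_v le_nm) : X != X' by apply: contraNneq neq => ->.
  by apply: leq_trans; lia.
- by exists 0; split => [y|//]; rewrite ball_C count_size.
- by rewrite ball_C size_map -cardE card_mx cardF addKn mulnC.
Qed.
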